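(* Let the alphabet be countable, $\{\varphi_1,\dots,\varphi_n\}$ a finite set of sentences, and $\mu_0:\{\varphi_1,\dots,\varphi_n\}\to[0,1]$ a function. For each $S\subseteq\{1,\dots,n\}$ let $\psi_S:=(\bigwedge_{i\in S}\varphi_i)\wedge(\bigwedge_{j\in\{1,\dots,n\}\setminus S}\neg\varphi_j)$. Then: (a) $\mu_0$ can be extended to a probability on sentences $\mu$ (i.e. $\mu(\varphi_i)=\mu_0(\varphi_i)$ for all $i$) if and only if the following system in the $2^n$ variables $a_S$, $S\subseteq\{1,\dots,n\}$, has a solution: $\sum_{S}a_S=1$; $\sum_{S: i\in S}a_S=\mu_0(\varphi_i)$ for $i=1,\dots,n$; $a_S\ge0$ for all $S$; $a_S=0$ whenever $\psi_S$ has no model. (b) $\mu_0$ can be extended to a Gaifman probability on sentences if and only if the same system, with the last condition replaced by ''$a_S=0$ whenever $\psi_S$ has no separating model'', has a solution.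
   Context: Setting: higher-order logic (Church's simple theory of types, without a description operator), with Henkin semantics. Types are generated from $o$ and $\imath$ by $\alpha\to\beta$; an alphabet has variables of each type, equality constants $=_{\alpha\to\alpha\to o}$ and non-logical constants; it is countable if its set of constants is countable. Sentences are closed terms of type $o$; $\mathcal S$ is the set of sentences. An interpretation consists of domains $D_\alpha$ ($D_o=\{\mathsf T,\mathsf F\}$, $D_{\alpha\to\beta}$ a set of functions) and a valuation of constants such that every term has a denotation $V(t,I)$. A sentence is valid if true in every interpretation; a model of a sentence is an interpretation in which it is true. $I$ is separating if for all closed terms $r,s$ of the same function type $\alpha\to\beta$ with $V(r,I)\neq V(s,I)$ there is a closed term $t$ of type $\alpha$ (over the alphabet) with $V((r\,t),I)\neq V((s\,t),I)$; a separating model is a separating interpretation that is a model. A probability on sentences is a non-negative $\mu:\mathcal S\to\mathbb R$ with $\mu(\varphi)=1$ for valid $\varphi$ and $\mu(\varphi\vee\psi)=\mu(\varphi)+\mu(\psi)$ whenever $\neg(\varphi\wedge\psi)$ is valid. $\mu$ is Gaifman if for all closed terms $r,s$ of the same function type $\alpha\to\beta$, $\mu(r=s)=\inf_{\{t_1,\dots,t_n\}}\mu(\bigwedge_{i=1}^n((r\,t_i)=(s\,t_i)))$ over all finite sets of closed terms of type $\alpha$. *)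

From HB Require Import structures.
From mathcomp Require Import all_boot all_order all_algebra.
From Stdlib Require Import Reals.
From mathcomp Require Import Rstruct.
Set Implicit Arguments.
Unset Strict Implicit.
Unset Printing Implicit Defensive.
Import Order.TTheory GRing.Theory Num.Theory.
Local Open Scope ring_scope.

Inductive ty : Type := To | Ti | Arr of ty & ty.

(* Besides the equality constants
   TEq a : a -> a -> o and the non-logical constants TCst c, the logical
   connectives ~, /\, \/ are primitive constants with fixed meaning. *)
Inductive var : list ty -> ty -> Type :=
| VZ (G : list ty) (a : ty) : var (a :: G) a
| VS (G : list ty) (a b : ty) : var G a -> var (b :: G) a.

Section Logic.
Variables (C : Type) (ctype : C -> ty).

Inductive tm : list ty -> ty -> Type :=
| TVar (G : list ty) (a : ty) : var G a -> tm G a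
| TCst (G : list ty) (c : C) : tm G (ctype c)
| TEq  (G : list ty) (a : ty) : tm G (Arr a (Arr a To))
| TNeg (G : list ty) : tm G (Arr To To)
| TAnd (G : list ty) : tm G (Arr To (Arr To To))
| TOr  (G : list ty) : tm G (Arr To (Arr To To))
| TApp (G : list ty) (a b : ty) : tm G (Arr a b) -> tm G a -> tm G b
| TLam (G : list ty) (a b : ty) : tm (a :: G) b -> tm G (Arr a b).

Definition sentence := tm nil To.

Definition tneg (p : sentence) : sentence := TApp (TNeg nil) p.
Definition tand (p q : sentence) : sentence := TApp (TApp (TAnd nil) p) q.
Definition tor (p q : sentence) : sentence := TApp (TApp (TOr nil) p) q.
Definition teq (a : ty) (r s : tm nil a) : sentence := TApp (TApp (TEq nil a) r) s.

(* a fixed valid sentence, (\x:o. x) = (\x:o. x), used as empty conjunction *)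
Definition tid : tm nil (Arr To To) := TLam (TVar (VZ nil To)).
Definition ttop : sentence := teq tid tid.

Fixpoint bigAnd (l : seq sentence) : sentence :=
  match l with
  | [::] => ttop
  | [:: p] => p
  | p :: l' => tand p (bigAnd l')
  end.

(* D_a (dom a) with D_{a->b} a set of functions, represented extensionally
   via app; D_o is {T,F} (in bijection with bool via tv). *)
Record interp := Interp {
  dom : ty -> Type;
  app : forall a b : ty, dom (Arr a b) -> dom a -> dom b;
  app_ext : forall (a b : ty) (f g : dom (Arr a b)),
      (forall x, app f x = app g x) -> f = g;
  tv : dom To -> bool;
  tv_bij : bijective tv;
  dom_i : inhabited (dom Ti);
  cval : forall c : C, dom (ctype c)
}.

Section Den.
Variable I : interp.

Fixpoint env (G : list ty) : Type :=
  match G with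
  | nil => unit
  | a :: G' => (dom I a * env G')%type
  end.

Fixpoint lookup (G : list ty) (a : ty) (v : var G a) : env G -> dom I a :=
  match v in var G a return env G -> dom I a with
  | VZ G a => fun r => r.1
  | VS G a b v' => fun r => lookup v' r.2
  end.

(* denotation relation: den t r v  means  V(t, I, r) = v *)
Inductive den : forall (G : list ty) (a : ty), tm G a -> env G -> dom I a -> Prop :=
| DVar G a (v : var G a) r : den (TVar v) r (lookup v r)
| DCst G c r : den (TCst G c) r (cval I c)
| DEq G a r (e : dom I (Arr a (Arr a To))) :
    (forall x y, @tv I (app (app e x) y) = true <-> x = y) -> den (TEq G a) r e
| DNeg G r (e : dom I (Arr To To)) :
    (forall x, @tv I (app e x) = ~~ @tv I x) -> den (TNeg G) r e
| DAnd G r (e : dom I (Arr To (Arr To To))) :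
    (forall x y, @tv I (app (app e x) y) = @tv I x && @tv I y) -> den (TAnd G) r e
| DOr G r (e : dom I (Arr To (Arr To To))) :
    (forall x y, @tv I (app (app e x) y) = @tv I x || @tv I y) -> den (TOr G) r e
| DApp G a b (f : tm G (Arr a b)) (t : tm G a) r vf vt :
    den f r vf -> den t r vt -> den (TApp f t) r (app vf vt)
| DLam G a b (t : tm (a :: G) b) r (e : dom I (Arr a b)) :
    (forall x, den t (x, r) (app e x)) -> den (TLam t) r e.

Definition is_interp : Prop :=
  forall (G : list ty) (a : ty) (t : tm G a) (r : env G), exists v, den t r v.

Definition holds (p : sentence) : Prop :=
  exists v, den p (tt : env nil) v /\ @tv I v = true.

Definition separating : Prop :=
  forall (a b : ty) (r s : tm nil (Arr a b)) (vr vs : dom I (Arr a b)),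
    den r (tt : env nil) vr -> den s (tt : env nil) vs -> vr <> vs ->
    exists (t : tm nil a) (wr ws : dom I b),
      den (TApp r t) (tt : env nil) wr /\ den (TApp s t) (tt : env nil) ws /\ wr <> ws.
End Den.

Definition valid (p : sentence) : Prop :=
  forall I : interp, is_interp I -> holds I p.

Definition has_model (p : sentence) : Prop :=
  exists I : interp, is_interp I /\ holds I p.

Definition has_separating_model (p : sentence) : Prop :=
  exists I : interp, is_interp I /\ separating I /\ holds I p.

Definition probability (mu : sentence -> R) : Prop :=
  (forall p, (0 <= mu p)%R) /\
  (forall p, valid p -> mu p = 1%R) /\
  (forall p q, valid (tneg (tand p q)) -> mu (tor p q) = (mu p + mu q)%R).

(* Gaifman condition: mu(r = s) is the infimum, over finite nonempty sets
   {t_1,...,t_k} of closed terms, of mu(/\_i (r t_i = s t_i)). *)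
Definition gaif_conj (a b : ty) (r s : tm nil (Arr a b)) (ts : seq (tm nil a)) : sentence :=
  bigAnd [seq teq (TApp r t) (TApp s t) | t <- ts].

Definition gaifman (mu : sentence -> R) : Prop :=
  forall (a b : ty) (r s : tm nil (Arr a b)),
    (forall (t : tm nil a) (ts : seq (tm nil a)),
        (mu (teq r s) <= mu (gaif_conj r s (t :: ts)))%R) /\
    (forall eps : R, (0 < eps)%R ->
        exists (t : tm nil a) (ts : seq (tm nil a)),
          (mu (gaif_conj r s (t :: ts)) < mu (teq r s) + eps)%R).

Definition psi (n : nat) (phi : 'I_n -> sentence) (S : {set 'I_n}) : sentence :=
  tand (bigAnd [seq phi i | i <- enum S])
       (bigAnd [seq tneg (phi j) | j <- enum (~: S)]).

Definition lin_system (sat : sentence -> Prop) (n : nat)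
    (phi : 'I_n -> sentence) (mu0 : sentence -> R) : Prop :=
  exists a : {set 'I_n} -> R,
    (\sum_(S : {set 'I_n}) a S = 1)%R /\
    (forall i : 'I_n, (\sum_(S : {set 'I_n} | i \in S) a S)%R = mu0 (phi i)) /\
    (forall S, (0 <= a S)%R) /\
    (forall S, ~ sat (psi phi S) -> a S = 0%R).

End Logic.

From Pilot Require Import Defs.
From HB Require Import structures.
From mathcomp Require Import all_boot all_order all_algebra.
From Stdlib Require Import Rbase Lra.
From Stdlib Require Import Program.Equality.
From mathcomp Require Import Rstruct boolp.
Import Order.TTheory GRing.Theory Num.Theory.
Set Implicit Arguments.
Unset Strict Implicit.
Unset Printing Implicit Defensive.

(* (a) A probability mu yields the solution a_S := mu(psi_S): the psi_S are pairwise
   exclusive and jointly exhaustive, phi_i is equivalent to the disjunction of the psi_S with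
   i in S, and a sentence without a model has probability 0.  Conversely, a solution is
   realised by the mixture sum_S a_S [M_S |= -], where M_S is a model of psi_S whenever
   a_S <> 0.
   (b) A finite mixture of separating models is Gaifman: finitely many arguments witness every
   inequality r <> s holding in one of the models.  Conversely, under a Gaifman probability a
   sentence of positive probability has a separating model.  The alphabet being countable, one
   enumerates all sentences and all pairs of closed terms of function type and refines the
   sentence step by step, keeping its probability positive, so as to decide every sentence and
   to witness every failed equation r = s by an argument t with r t <> s t (this is where the
   Gaifman condition enters).  The sentences entailed at some stage form a complete Henkin
   theory, whose term model is a separating model of it. *)

(** * Renaming and substitution *)

Section Syntax.
Variables (C : Type) (ctype : C -> ty).
Local Notation tm := (tm ctype).

Definition renaming (G D : seq ty) := forall a, var G a -> var D a.
Definition substitution (G D : seq ty) := forall a, var G a -> tm D a.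

Definition up_ren G D b (xi : renaming G D) : renaming (b :: G) (b :: D) :=
  fun c v => match v in var G' c' return
     (match G' with nil => unit | a' :: G'' => renaming G'' D -> var (a' :: D) c' end) with
   | VZ _ a0 => fun _ => VZ D a0
   | VS _ a0 b0 w => fun xi => VS b0 (xi a0 w)
   end xi.

Fixpoint rename G a (t : tm G a) : forall D, renaming G D -> tm D a :=
  match t in Defs.tm _ G a return forall D, renaming G D -> tm D a with
  | TVar _ _ v => fun D xi => TVar ctype (xi _ v)
  | TCst _ c => fun D _ => TCst ctype D c
  | TEq _ a => fun D _ => TEq ctype D a
  | TNeg _ => fun D _ => TNeg ctype D
  | TAnd _ => fun D _ => TAnd ctype D
  | TOr _ => fun D _ => TOr ctype D
  | TApp _ _ _ f u => fun D xi => TApp (rename f xi) (rename u xi)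
  | TLam _ _ _ t => fun D xi => TLam (rename t (up_ren xi))
  end.

Definition shift G b : renaming G (b :: G) := fun c w => VS b w.

Definition scons G D a (u : tm D a) (s : substitution G D) : substitution (a :: G) D :=
  fun c v => match v in var G' c' return
     (match G' with
      | nil => unit
      | a' :: G'' => tm D a' -> substitution G'' D -> tm D c' end) with
   | VZ _ _ => fun u _ => u
   | VS _ a0 _ w => fun _ s => s a0 w
   end u s.

Definition up_sub G D b (s : substitution G D) : substitution (b :: G) (b :: D) :=
  scons (TVar ctype (VZ D b)) (fun c w => rename (s c w) (@shift D b)).

Fixpoint subst G a (t : tm G a) : forall D, substitution G D -> tm D a :=
  match t in Defs.tm _ G a return forall D, substitution G D -> tm D a with
  | TVar _ _ v => fun D s => s _ v
  | TCst _ c => fun D _ => TCst ctype D c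
  | TEq _ a => fun D _ => TEq ctype D a
  | TNeg _ => fun D _ => TNeg ctype D
  | TAnd _ => fun D _ => TAnd ctype D
  | TOr _ => fun D _ => TOr ctype D
  | TApp _ _ _ f u => fun D s => TApp (subst f s) (subst u s)
  | TLam _ _ _ t => fun D s => TLam (subst t (up_sub s))
  end.

Lemma var_cons_ind G b (P : forall c, var (b :: G) c -> Prop) :
  P b (VZ G b) -> (forall c w, P c (VS b w)) -> forall c v, P c v.
Proof. by move=> P0 PS c v; dependent destruction v. Qed.

Lemma var_nil a (v : var nil a) : False.
Proof.
suff : forall G (w : var G a), G = nil -> False by move/(_ nil v).
by move=> G [].
Qed.

Lemma var_funext G (T : ty -> Type) (f g : forall a, var G a -> T a) :
  (forall a v, f a v = g a v) -> f = g.
Proof. by move=> fg; apply: functional_extensionality_dep => a; apply: funext. Qed.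

Lemma rename_rename G a (t : tm G a) D E (xi : renaming G D) (ze : renaming D E) :
  rename (rename t xi) ze = rename t (fun c v => ze c (xi c v)).
Proof.
elim: t D E xi ze => //= {G a} [G a b f IHf u IHu | G a b t IH] D E xi ze.
  by rewrite IHf IHu.
rewrite IH; congr (TLam (rename t _)).
by apply: (var_funext (T := var (a :: E))); apply: var_cons_ind.
Qed.

Lemma subst_rename G a (t : tm G a) D E (xi : renaming G D) (s : substitution D E) :
  subst (rename t xi) s = subst t (fun c v => s c (xi c v)).
Proof.
elim: t D E xi s => //= {G a} [G a b f IHf u IHu | G a b t IH] D E xi s.
  by rewrite IHf IHu.
rewrite IH; congr (TLam (subst t _)).
by apply: (var_funext (T := tm (a :: E))); apply: var_cons_ind.
Qed.

Lemma rename_subst G a (t : tm G a) D E (s : substitution G D) (xi : renaming D E) :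
  rename (subst t s) xi = subst t (fun c v => rename (s c v) xi).
Proof.
elim: t D E s xi => //= {G a} [G a b f IHf u IHu | G a b t IH] D E s xi.
  by rewrite IHf IHu.
rewrite IH; congr (TLam (subst t _)).
apply: (var_funext (T := tm (a :: E))); apply: var_cons_ind => //= c w.
by rewrite !rename_rename.
Qed.

Lemma subst_subst G a (t : tm G a) D E (s : substitution G D) (s' : substitution D E) :
  subst (subst t s) s' = subst t (fun c v => subst (s c v) s').
Proof.
elim: t D E s s' => //= {G a} [G a b f IHf u IHu | G a b t IH] D E s s'.
  by rewrite IHf IHu.
rewrite IH; congr (TLam (subst t _)).
apply: (var_funext (T := tm (a :: E))); apply: var_cons_ind => //= c w.
by rewrite /up_sub /= subst_rename rename_subst.
Qed.

Lemma subst_var G a (t : tm G a) : subst t (@TVar C ctype G) = t.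
Proof.
elim: t => //= {G a} [G a b f IHf u IHu | G a b t IH]; first by rewrite IHf IHu.
suff -> : up_sub (b := a) (@TVar C ctype G) = @TVar C ctype (a :: G) by rewrite IH.
by apply: (var_funext (T := tm (a :: G))); apply: var_cons_ind.
Qed.

Lemma subst_closed a (t : tm nil a) (s : substitution nil nil) : subst t s = t.
Proof.
suff -> : s = @TVar C ctype nil by rewrite subst_var.
by apply: (var_funext (T := tm nil)) => c v; case: (var_nil v).
Qed.

Lemma subst_up_scons G a b (t : tm (a :: G) b) (s : substitution G nil) (u : tm nil a) :
  subst (subst t (up_sub s)) (scons u (@TVar C ctype nil)) = subst t (scons u s).
Proof.
rewrite subst_subst; congr (subst t _).
apply: (var_funext (T := tm nil)); apply: var_cons_ind => //= c w.
by rewrite subst_rename subst_closed.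
Qed.
End Syntax.

(** * Semantics *)

Section Semantics.
Variables (C : Type) (ctype : C -> ty) (I : interp ctype).
Local Notation tm := (tm ctype).
Local Notation sentence := (sentence ctype).

Lemma tv_inj : injective (@tv _ _ I).
Proof. by case: (tv_bij I) => g gK _ x y E; rewrite -[x]gK -[y]gK E. Qed.

Definition den_inv G a (t : tm G a) : env I G -> dom I a -> Prop :=
  match t in Defs.tm _ G a return env I G -> dom I a -> Prop with
  | TVar _ _ v => fun r w => w = lookup v r
  | TCst _ c => fun _ w => w = cval I c
  | TEq _ _ => fun _ e => forall x y, tv (app (app e x) y) = true <-> x = y
  | TNeg _ => fun _ e => forall x, tv (app e x) = ~~ tv x
  | TAnd _ => fun _ e => forall x y, tv (app (app e x) y) = tv x && tv y
  | TOr _ => fun _ e => forall x y, tv (app (app e x) y) = tv x || tv y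
  | TApp _ _ _ f u => fun r w => exists vf vu, den f r vf /\ den u r vu /\ w = app vf vu
  | TLam _ _ _ t => fun r e => forall x, den t (x, r) (app e x)
  end.

Lemma denP G a (t : tm G a) r v : den t r v -> den_inv t r v.
Proof. by case => //=; eauto. Qed.

Lemma den_fun G a (t : tm G a) (r : env I G) (v1 v2 : dom I a) :
  den t r v1 -> den t r v2 -> v1 = v2.
Proof.
move=> H; elim: H v2 => {G a t r v1}.
- by move=> G a v r v2 /denP.
- by move=> G c r v2 /denP.
- move=> G a r e He v2 /denP /= H.
  apply: app_ext => x; apply: app_ext => y; apply: tv_inj.
  by apply/idP/idP => [/He/H | /H/He].
- move=> G r e He v2 /denP /= H.
  by apply: app_ext => x; apply: tv_inj; rewrite He H.
- move=> G r e He v2 /denP /= H.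
  by apply: app_ext => x; apply: app_ext => y; apply: tv_inj; rewrite He H.
- move=> G r e He v2 /denP /= H.
  by apply: app_ext => x; apply: app_ext => y; apply: tv_inj; rewrite He H.
- move=> G a b f t r vf vt _ IHf _ IHt v2 /denP /= [vf' [vt' [Hf [Ht ->]]]].
  by rewrite (IHf _ Hf) (IHt _ Ht).
- move=> G a b t r e _ IH v2 /denP /= Ht.
  by apply: app_ext => x; apply: IH.
Qed.

Lemma den_rename G a (t : tm G a) (r : env I G) v :
  den t r v -> forall D (xi : renaming G D) (h : env I D),
  (forall c (x : var G c), lookup (xi c x) h = lookup x r) -> den (rename t xi) h v.
Proof.
elim => {G a t r v} /=; try by constructor.
- by move=> G a v r D xi h H; rewrite -H; exact: DVar.
- by move=> G a b f t r vf vt _ IHf _ IHt D xi h H; apply: DApp; [exact: IHf | exact: IHt].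
- move=> G a b t r e _ IH D xi h H; apply: DLam => x; apply: IH.
  exact: var_cons_ind.
Qed.

Lemma den_subst G a (t : tm G a) (r : env I G) v :
  den t r v -> forall D (s : substitution ctype G D) (h : env I D),
  (forall c (x : var G c), den (s c x) h (lookup x r)) -> den (subst t s) h v.
Proof.
elim => {G a t r v} /=; try by constructor.
- by move=> G a v r D s h H; apply: H.
- by move=> G a b f t r vf vt _ IHf _ IHt D s h H; apply: DApp; [exact: IHf | exact: IHt].
- move=> G a b t r e _ IH D s h H; apply: DLam => x; apply: IH.
  apply: var_cons_ind => /=; first exact: (DVar (VZ D a) (x, h)).
  by move=> c w; apply: den_rename; first exact: H.
Qed.

Hypothesis HI : is_interp I.

Lemma ex_den G a (t : tm G a) (r : env I G) : exists v, den t r v.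
Proof. exact: HI. Qed.

Lemma holds_den (p : sentence) (v : dom I To) :
  den p (tt : env I nil) v -> holds I p <-> tv v.
Proof. by move=> Hv; split => [[w [Hw Ew]] | Ev]; [rewrite (den_fun Hv Hw) | exists v]. Qed.

Lemma holds_tneg p : holds I (tneg p) <-> ~ holds I p.
Proof.
have [v Hv] := ex_den p tt; have [e He] := ex_den (TNeg ctype nil) tt.
rewrite (holds_den (DApp He Hv)) (holds_den Hv) (denP He).
exact: iff_sym (rwP negP).
Qed.

Lemma holds_tand p q : holds I (tand p q) <-> holds I p /\ holds I q.
Proof.
have [v Hv] := ex_den p tt; have [w Hw] := ex_den q tt.
have [e He] := ex_den (TAnd ctype nil) tt.
rewrite (holds_den (DApp (DApp He Hv) Hw)) (holds_den Hv) (holds_den Hw) (denP He).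
exact: iff_sym (rwP andP).
Qed.

Lemma holds_tor p q : holds I (tor p q) <-> holds I p \/ holds I q.
Proof.
have [v Hv] := ex_den p tt; have [w Hw] := ex_den q tt.
have [e He] := ex_den (TOr ctype nil) tt.
rewrite (holds_den (DApp (DApp He Hv) Hw)) (holds_den Hv) (holds_den Hw) (denP He).
exact: iff_sym (rwP orP).
Qed.

Lemma holds_teq a (r s : tm nil a) vr vs :
  den r (tt : env I nil) vr -> den s (tt : env I nil) vs -> holds I (teq r s) <-> vr = vs.
Proof.
move=> Hr Hs; have [e He] := ex_den (TEq ctype nil a) tt.
by rewrite (holds_den (DApp (DApp He Hr) Hs)); apply: (denP He).
Qed.

Lemma holds_teq_refl a (r : tm nil a) : holds I (teq r r).
Proof. by have [v Hv] := ex_den r tt; apply/(holds_teq Hv Hv). Qed.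

Lemma holds_teq_sym a (r s : tm nil a) : holds I (teq r s) -> holds I (teq s r).
Proof.
have [v Hv] := ex_den r tt; have [w Hw] := ex_den s tt.
by rewrite (holds_teq Hv Hw) (holds_teq Hw Hv).
Qed.

Lemma holds_teq_trans a (r s u : tm nil a) :
  holds I (teq r s) -> holds I (teq s u) -> holds I (teq r u).
Proof.
have [v Hv] := ex_den r tt; have [w Hw] := ex_den s tt; have [z Hz] := ex_den u tt.
by rewrite (holds_teq Hv Hw) (holds_teq Hw Hz) (holds_teq Hv Hz) => -> ->.
Qed.

Lemma holds_teq_app a b (f g : tm nil (Arr a b)) (u w : tm nil a) :
  holds I (teq f g) -> holds I (teq u w) -> holds I (teq (TApp f u) (TApp g w)).
Proof.
have [vf Hf] := ex_den f tt; have [vg Hg] := ex_den g tt.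
have [vu Hu] := ex_den u tt; have [vw Hw] := ex_den w tt.
rewrite (holds_teq Hf Hg) (holds_teq Hu Hw) (holds_teq (DApp Hf Hu) (DApp Hg Hw)).
by move=> -> ->.
Qed.

Lemma holds_teq_iff (p q : sentence) : holds I (teq p q) <-> (holds I p <-> holds I q).
Proof.
have [v Hv] := ex_den p tt; have [w Hw] := ex_den q tt.
rewrite (holds_teq Hv Hw) (holds_den Hv) (holds_den Hw).
split => [-> // | vw]; apply: tv_inj.
by case: (tv v) vw; case: (tv w) => // -[H1 H2]; [move: (H1 erefl) | move: (H2 erefl)].
Qed.

Lemma holds_ttop : holds I (ttop ctype).
Proof. exact: holds_teq_refl. Qed.

Lemma holds_bigAnd_map (T : Type) (f : T -> sentence) (l : seq T) :
  holds I (bigAnd (map f l)) <-> forall x, List.In x l -> holds I (f x).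
Proof.
elim: l => [|x [|y l] IH] /=; first by split => // _; exact: holds_ttop.
  by split => [Hx z [<- | []] // | H]; apply: H; left.
rewrite holds_tand IH; split => [[Hx Hl] z [<- | Hz] | H]; [done | exact: Hl | ].
by split => [|z Hz]; apply: H; auto.
Qed.

Lemma holds_beta a b (t : tm [:: a] b) (u : tm nil a) :
  holds I (teq (TApp (TLam t) u) (subst t (scons u (@TVar C ctype nil)))).
Proof.
have [e He] := ex_den (TLam t) tt; have [vu Hu] := ex_den u tt.
have /= Ht := denP He vu.
apply/(holds_teq (DApp He Hu) (den_subst Ht _)) => //.
by apply: var_cons_ind => //= c w; case: (var_nil w).
Qed.

Lemma dom_inhabited a : inhabited (dom I a).
Proof.
elim: a => [||a _ b [y]].
- by case: (tv_bij I) => g _ _; constructor; exact: g true.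
- exact: dom_i.
- have [e _] := ex_den (TLam (a := a) (TVar ctype (VS a (VZ nil b)))) ((y, tt) : env I [:: b]).
  by constructor.
Qed.

Definition tconst a (p : sentence) : tm nil (Arr a To) := TLam (rename p (@shift nil a)).

Lemma holds_tconst_neq a : ~ holds I (teq (tconst a (ttop ctype)) (tconst a (tneg (ttop ctype)))).
Proof.
have [x] := dom_inhabited a.
have app_tconst p e v : den (tconst a p) tt e -> den p (tt : env I nil) v -> app e x = v.
  move=> /denP /= /(_ x) He Hp; apply: den_fun He _.
  by apply: (den_rename Hp) => c w; case: (var_nil w).
have [v1 H1] := ex_den (ttop ctype) tt; have [v0 H0] := ex_den (tneg (ttop ctype)) tt.
have [e1 He1] := ex_den (tconst a (ttop ctype)) tt.
have [e0 He0] := ex_den (tconst a (tneg (ttop ctype))) tt.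
rewrite (holds_teq He1 He0) => E.
have E10 : v1 = v0 by rewrite -(app_tconst _ _ _ He1 H1) -(app_tconst _ _ _ He0 H0) E.
have := holds_ttop; rewrite (holds_den H1) E10 -(holds_den H0) holds_tneg.
by apply; exact: holds_ttop.
Qed.

Lemma holds_gaif_conj a b (r s : tm nil (Arr a b)) ts :
  holds I (gaif_conj r s ts) <-> forall t, List.In t ts -> holds I (teq (TApp r t) (TApp s t)).
Proof. exact: holds_bigAnd_map. Qed.

Lemma holds_gaif_conj_teq a b (r s : tm nil (Arr a b)) ts :
  holds I (teq r s) -> holds I (gaif_conj r s ts).
Proof. by move=> Hrs; apply/holds_gaif_conj => t _; apply: holds_teq_app Hrs (holds_teq_refl t). Qed.

Lemma separating_witness a b (r s : tm nil (Arr a b)) : separating I ->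
  ~ holds I (teq r s) -> exists t, ~ holds I (teq (TApp r t) (TApp s t)).
Proof.
move=> sepI Nrs; have [vr Hr] := ex_den r tt; have [vs Hs] := ex_den s tt.
have [|t [wr [ws [Hwr [Hws Nw]]]]] := sepI _ _ _ _ _ _ Hr Hs; first by move/(holds_teq Hr Hs).
by exists t; rewrite (holds_teq Hwr Hws).
Qed.

Lemma separating_closed_term a : separating I -> inhabited (tm nil a).
Proof.
by move=> sepI; have [t _] := separating_witness sepI (holds_tconst_neq (a := a)); constructor.
Qed.
End Semantics.

(** * Probabilities on sentences *)

Lemma In_mem (T : eqType) (x : T) (s : seq T) : List.In x s <-> x \in s.
Proof.
elim: s => //= y s IH; rewrite in_cons.
by split => [[-> | /IH ->] | /orP [/eqP -> | /IH]]; rewrite ?eqxx ?orbT; auto.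
Qed.

Section Consequence.
Variables (C : Type) (ctype : C -> ty).
Local Notation sentence := (sentence ctype).

Definition entails (p q : sentence) := forall I, is_interp I -> holds I p -> holds I q.

Definition bigOr (l : seq sentence) : sentence := foldr (@tor _ _) (tneg (ttop ctype)) l.

Lemma holds_bigOr_map I (HI : is_interp I) (T : Type) (f : T -> sentence) (l : seq T) :
  holds I (bigOr (map f l)) <-> exists2 x, List.In x l & holds I (f x).
Proof.
elim: l => [|x l IH] /=.
  by rewrite holds_tneg //; split => [[]|[]//]; exact: holds_ttop.
rewrite holds_tor // IH; split => [[Hx | [y Hy Hfy]] | [y [<- | Hy] Hfy]]; eauto.
Qed.
End Consequence.

Section Probability.
Variables (C : Type) (ctype : C -> ty).
Local Notation sentence := (sentence ctype).
Local Open Scope ring_scope.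
Local Open Scope R_scope.
Variable mu : sentence -> R.
Hypothesis Hmu : probability mu.

Lemma mu_ge0 p : 0 <= mu p. Proof. by case: Hmu => H _; apply: H. Qed.

Lemma mu_valid p : valid p -> mu p = 1. Proof. by case: Hmu => _ [H _]; apply: H. Qed.

Lemma mu_tor (p q : sentence) : (forall I, is_interp I -> holds I p -> ~ holds I q) ->
  mu (tor p q) = mu p + mu q.
Proof.
move=> pq; case: Hmu => _ [_]; apply => I HI.
by rewrite holds_tneg // holds_tand // => -[]; apply: pq.
Qed.

Lemma mu_tneg p : mu p + mu (tneg p) = 1.
Proof.
rewrite -mu_tor => [|I HI Hp]; last by rewrite holds_tneg.
by apply: mu_valid => I HI; rewrite holds_tor // holds_tneg //; apply: EM.
Qed.

Lemma mu_equiv (p q : sentence) : (forall I, is_interp I -> holds I p <-> holds I q) ->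
  mu p = mu q.
Proof.
move=> pq; have := mu_tneg q.
have <- : mu (tor p (tneg q)) = 1.
  by apply: mu_valid => I HI; rewrite holds_tor // holds_tneg // (pq I HI); apply: EM.
by rewrite mu_tor => [|I HI Hp]; [lra | rewrite holds_tneg // -(pq I HI); apply].
Qed.

Lemma mu_split p q : mu p = mu (tand p q) + mu (tand p (tneg q)).
Proof.
rewrite -mu_tor; last by move=> I HI; rewrite !holds_tand // holds_tneg //; tauto.
by apply: mu_equiv => I HI; rewrite holds_tor // !holds_tand // holds_tneg //; have := EM (holds I q); tauto.
Qed.

Lemma mu_le (p q : sentence) : entails p q -> mu p <= mu q.
Proof.
move=> pq; rewrite (mu_split q p) (@mu_equiv (tand q p) p).
  by have := mu_ge0 (tand q (tneg p)); lra.
by move=> I HI; rewrite holds_tand //; have := pq I HI; tauto.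
Qed.

Lemma mu_tor_le p q : mu (tor p q) <= mu p + mu q.
Proof.
rewrite (@mu_equiv (tor p q) (tor p (tand q (tneg p)))).
  rewrite mu_tor; last by move=> I HI; rewrite holds_tand // holds_tneg //; tauto.
  suff : mu (tand q (tneg p)) <= mu q by lra.
  by apply: mu_le => I HI; rewrite holds_tand //; case.
move=> I HI; rewrite !holds_tor // holds_tand // holds_tneg //; have := EM (holds I p); tauto.
Qed.

Lemma mu_no_model p : ~ has_model p -> mu p = 0.
Proof.
move=> Np; have := mu_tneg p; rewrite (@mu_valid (tneg p)); first lra.
by move=> I HI; rewrite holds_tneg // => Hp; apply: Np; exists I.
Qed.

Lemma has_model_mu_gt0 p : 0 < mu p -> has_model p.
Proof. by move=> Hp; apply: contrapT => /mu_no_model; lra. Qed.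
End Probability.

Section Partition.
Variables (C : Type) (ctype : C -> ty) (n : nat) (phi : 'I_n -> sentence ctype).
Local Open Scope ring_scope.
Local Open Scope R_scope.

Definition truth_set (I : interp ctype) : {set 'I_n} := [set i | `[< holds I (phi i) >]].

Lemma holds_psi I (HI : is_interp I) S : holds I (psi phi S) <-> S = truth_set I.
Proof.
rewrite /psi holds_tand // !holds_bigAnd_map //; split.
- move=> [inS notinS]; apply/setP => i; rewrite inE.
  apply/idP/idP => [iS | /asboolP Hi]; first by apply/asboolP; apply: inS; rewrite In_mem mem_enum.
  apply: contrapT => iS.
  by have := notinS i; rewrite In_mem mem_enum inE holds_tneg //; apply => //; exact/negP.
- move=> ->; split => i; rewrite In_mem mem_enum ?inE; first by move/asboolP.
  by move=> /asboolP Ni; apply/holds_tneg.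
Qed.

Variable mu : sentence ctype -> R.
Hypothesis Hmu : probability mu.

Lemma mu_bigOr_psi (l : seq {set 'I_n}) : uniq l ->
  mu (bigOr (map (psi phi) l)) = \sum_(S <- l) mu (psi phi S).
Proof.
elim: l => [_ | S l IH /andP [Sl Ul]] /=.
  by rewrite big_nil; apply: (mu_no_model Hmu) => -[I [HI]]; rewrite holds_tneg //; apply; exact: holds_ttop.
rewrite big_cons -IH // -RplusE; apply: (mu_tor Hmu) => I HI.
rewrite holds_psi // holds_bigOr_map // => ES [S' S'l].
by rewrite holds_psi // -ES => ES'; move/In_mem: S'l; rewrite ES' (negbTE Sl).
Qed.

Lemma sum_mu_psi : \sum_(S : {set 'I_n}) mu (psi phi S) = 1.
Proof.
rewrite -(mu_bigOr_psi (index_enum_uniq _)); apply: (mu_valid Hmu) => I HI.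
apply/holds_bigOr_map => //; exists (truth_set I); last exact/holds_psi.
by rewrite In_mem mem_index_enum.
Qed.

Lemma sum_mu_psi_mem i : \sum_(S : {set 'I_n} | i \in S) mu (psi phi S) = mu (phi i).
Proof.
rewrite -big_filter -mu_bigOr_psi ?filter_uniq ?index_enum_uniq //.
apply: (mu_equiv Hmu) => I HI; rewrite holds_bigOr_map //; split.
- move=> [S]; rewrite In_mem mem_filter holds_psi // => /andP [iS _] ES.
  by move: iS; rewrite ES inE => /asboolP.
- move=> Hi; exists (truth_set I); last exact/holds_psi.
  by rewrite In_mem mem_filter mem_index_enum inE andbT; apply/asboolP.
Qed.

Lemma lin_system_of_probability (sat : sentence ctype -> Prop) (mu0 : sentence ctype -> R) :
  (forall i, mu (phi i) = mu0 (phi i)) ->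
  (forall S, ~ sat (psi phi S) -> mu (psi phi S) = 0) -> lin_system sat phi mu0.
Proof.
move=> mu_phi mu_psi; exists (fun S => mu (psi phi S)); split; first exact: sum_mu_psi.
split; first by move=> i; rewrite sum_mu_psi_mem.
by split => // S; apply: mu_ge0.
Qed.
End Partition.

(** * Mixtures of interpretations *)

Section Mixture.
Variables (C : Type) (ctype : C -> ty) (K : finType).
Variables (w : K -> R) (M : K -> interp ctype).
Local Notation sentence := (sentence ctype).
Local Open Scope ring_scope.
Local Open Scope R_scope.
Hypothesis w_ge0 : forall k, 0 <= w k.
Hypothesis w_sum1 : \sum_k w k = 1.
Hypothesis M_interp : forall k, is_interp (M k).

Lemma sum_eq1_exists_neq0 : exists k, w k <> 0.
Proof.
apply: contrapT => Nw; move: w_sum1; rewrite big1 => [/esym/R1_neq_R0 // | k _].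
by apply: contrapT => wk; apply: Nw; exists k.
Qed.

Definition mixture (p : sentence) : R := \sum_(k | `[< holds (M k) p >]) w k.

Lemma mixture_probability : probability mixture.
Proof.
split; first by move=> p; apply/RleP/sumr_ge0 => k _; apply/RleP.
split; first by move=> p Hp; rewrite -w_sum1; apply: eq_bigl => k; apply/asboolP/Hp.
move=> p q Hpq; rewrite /mixture (bigID (fun k => `[< holds (M k) p >])) /=.
have disj k : ~ (holds (M k) p /\ holds (M k) q).
  by have := Hpq _ (@M_interp k); rewrite holds_tneg // holds_tand.
congr (_ + _); apply: eq_bigl => k;
  rewrite (asbool_equiv_eq (holds_tor (@M_interp k) p q)) asbool_or;
  case: (asboolP (holds (M k) p)); case: (asboolP (holds (M k) q)) => //= Hq Hp.
by case: (disj k).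
Qed.

Lemma mixture_gaifman : (forall k, separating (M k)) -> gaifman mixture.
Proof.
move=> sepM a b r s; split.
  move=> t ts; apply: (mu_le mixture_probability) => I HI; exact: holds_gaif_conj_teq.
move=> eps eps_gt0.
have [k0 _] := sum_eq1_exists_neq0.
have [t0] := separating_closed_term (@M_interp k0) a (sepM k0).
have /choice [wit Hwit] : forall k, exists t, holds (M k) (teq r s) \/
    ~ holds (M k) (teq (TApp r t) (TApp s t)).
  move=> k; case: (EM (holds (M k) (teq r s))) => Hrs; first by exists t0; left.
  by have [t Nt] := separating_witness (@M_interp k) (sepM k) Hrs; exists t; right.
exists t0, (map wit (enum K)).
suff -> : mixture (gaif_conj r s (t0 :: map wit (enum K))) = mixture (teq r s) by lra.
apply: eq_bigl => k; apply: asbool_equiv_eq; split; last exact: holds_gaif_conj_teq.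
move/holds_gaif_conj => /(_ (@M_interp k)) Hconj; case: (Hwit k) => // Nk; case: Nk.
by apply: Hconj; right; apply: List.in_map; rewrite In_mem mem_enum.
Qed.
End Mixture.

Section LinSystemMixture.
Variables (C : Type) (ctype : C -> ty) (n : nat) (phi : 'I_n -> sentence ctype).
Variable mu0 : sentence ctype -> R.
Local Open Scope ring_scope.
Local Open Scope R_scope.

Lemma lin_system_mixture (sat : sentence ctype -> Prop) (Q : interp ctype -> Prop) :
  (forall p, sat p -> exists I, [/\ is_interp I, Q I & holds I p]) ->
  lin_system sat phi mu0 ->
  exists (w : {set 'I_n} -> R) (M : {set 'I_n} -> interp ctype),
    [/\ forall S, 0 <= w S, \sum_S w S = 1, forall S, is_interp (M S) /\ Q (M S)
      & forall i, mixture w M (phi i) = mu0 (phi i)].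
Proof.
move=> satQ [a [a_sum1 [a_phi [a_ge0 a_sat]]]].
have [S0 a_S0] := sum_eq1_exists_neq0 a_sum1.
have [I0 [HI0 QI0 _]] := satQ _ (contrapT (a_S0 \o a_sat _)).
have /choice [M HM] : forall S, exists I, [/\ is_interp I, Q I & a S <> 0 -> holds I (psi phi S)].
  move=> S; case: (EM (a S = 0)) => [aS | /[dup] aS /(contra_not (a_sat S)) /contrapT].
    by exists I0; split.
  by case/satQ => I [HI QI Hpsi]; exists I; split.
exists a, M; split => // [S | i]; first by case: (HM S).
rewrite -a_phi /mixture [LHS]big_mkcond [RHS]big_mkcond; apply: eq_bigr => S _.
case: (EM (a S = 0)) => [-> | aS]; first by rewrite !if_same.
have [HIS _ /(_ aS)] := HM S; rewrite holds_psi // => ES.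
by rewrite {3}ES inE.
Qed.

Lemma probability_of_lin_system : lin_system (@has_model C ctype) phi mu0 ->
  exists mu, probability mu /\ forall i, mu (phi i) = mu0 (phi i).
Proof.
case/(lin_system_mixture (Q := fun=> True)) => [p [I [HI Hp]] | w [M [w_ge0 w_sum1 HM E]]].
  by exists I.
by exists (mixture w M); split => //; apply: mixture_probability => // S; case: (HM S).
Qed.

Lemma gaifman_of_lin_system : lin_system (@has_separating_model C ctype) phi mu0 ->
  exists mu, [/\ probability mu, gaifman mu & forall i, mu (phi i) = mu0 (phi i)].
Proof.
case/(lin_system_mixture (Q := @separating _ _)) => [p [I [HI [sepI Hp]]] | w [M [w_ge0 w_sum1 HM E]]].
  by exists I.
have M_interp S : is_interp (M S) by case: (HM S).
exists (mixture w M); split => //; first exact: mixture_probability.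
by apply: mixture_gaifman => // S; case: (HM S).
Qed.
End LinSystemMixture.

(** * Countability *)

Definition fun_pair (C : Type) (ctype : C -> ty) :=
  {a : ty & {b : ty & (tm ctype nil (Arr a b) * tm ctype nil (Arr a b))%type}}.

Definition enumerable (T : Type) := exists e : nat -> option T, forall x, exists k, e k = Some x.

Lemma enumerable_tree_code (T : Type) (g : T -> GenTree.tree nat) : injective g -> enumerable T.
Proof.
move=> g_inj.
exists (fun k => if pselect (exists x, pickle (g x) = k) is left H then Some (proj1_sig (cid H))
                 else None).
move=> x; exists (pickle (g x)); case: pselect => [H | []]; last by exists x.
by case: cid => y /= /(pcan_inj pickleK_inv) /g_inj ->.
Qed.

Section Countable.
Variables (C : Type) (ctype : C -> ty) (code_cst : C -> nat).
Hypothesis code_cst_inj : injective code_cst.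
Local Notation tree := (GenTree.tree nat).

Fixpoint ty_code (a : ty) : tree :=
  match a with
  | To => GenTree.Node 0 [::]
  | Ti => GenTree.Node 1 [::]
  | Arr a b => GenTree.Node 2 [:: ty_code a; ty_code b]
  end.

Lemma ty_code_inj : injective ty_code.
Proof. by elim=> [||a IHa b IHb] [||a' b'] //= [] /IHa -> /IHb ->. Qed.

Fixpoint var_code G a (v : var G a) : tree :=
  match v with
  | VZ _ _ => GenTree.Node 0 [::]
  | VS _ _ _ w => GenTree.Node 1 [:: var_code w]
  end.

Lemma var_code_inj G a (v w : var G a) : var_code v = var_code w -> v = w.
Proof. by elim: v w => [G0 a0 | G0 a0 b0 v IH] w; dependent destruction w => //= -[/IH ->]. Qed.

Fixpoint tm_code G a (t : tm ctype G a) : tree :=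
  match t with
  | TVar _ _ v => GenTree.Node 0 [:: var_code v]
  | TCst _ c => GenTree.Node 1 [:: GenTree.Leaf (code_cst c)]
  | TEq _ a => GenTree.Node 2 [:: ty_code a]
  | TNeg _ => GenTree.Node 3 [::]
  | TAnd _ => GenTree.Node 4 [::]
  | TOr _ => GenTree.Node 5 [::]
  | TApp _ a _ f u => GenTree.Node 6 [:: ty_code a; tm_code f; tm_code u]
  | TLam _ _ _ t => GenTree.Node 7 [:: tm_code t]
  end.

(* Heterogeneous form, so that the induction can go through [TApp] with its hidden argument type. *)
Lemma tm_code_inj_dep G a (t1 : tm ctype G a) G' a' (t2 : tm ctype G' a') :
  tm_code t1 = tm_code t2 -> G = G' -> a = a' -> JMeq t1 t2.
Proof.
elim: t1 G' a' t2 => [G0 a0 v|G0 c|G0 a0|G0|G0|G0|G0 a0 b0 f IHf u IHu|G0 a0 b0 t IH] G' a' t2;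
  case: t2 => [G1 a1 v'|G1 c'|G1 a1|G1|G1|G1|G1 a1 b1 f' u'|G1 a1 b1 t'] //=.
- by case=> E EG Ea; subst; rewrite (var_code_inj E).
- by case=> /code_cst_inj E EG _; subst.
- by case=> /ty_code_inj -> -> _.
- by move=> _ ->.
- by move=> _ ->.
- by move=> _ ->.
- case=> /ty_code_inj Ea Ef Eu EG Eb; subst.
  by rewrite (JMeq_eq (IHf _ _ f' Ef erefl erefl)) (JMeq_eq (IHu _ _ u' Eu erefl erefl)).
- by case=> Et EG [Ea Eb]; subst; rewrite (JMeq_eq (IH _ _ t' Et erefl erefl)).
Qed.

Lemma tm_code_inj G a : injective (@tm_code G a).
Proof. by move=> t1 t2 E; apply: JMeq_eq (tm_code_inj_dep E erefl erefl). Qed.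

Definition requirement_code (q : sentence ctype + fun_pair ctype) : tree :=
  match q with
  | inl p => GenTree.Node 0 [:: tm_code p]
  | inr (existT a (existT b (r, s))) =>
      GenTree.Node 1 [:: ty_code a; ty_code b; tm_code r; tm_code s]
  end.

Lemma requirement_code_inj : injective requirement_code.
Proof.
move=> [p | [a [b [r s]]]] [p' | [a' [b' [r' s']]]] //=; first by case=> /tm_code_inj ->.
by case=> /ty_code_inj Ea /ty_code_inj Eb; subst => /tm_code_inj -> /tm_code_inj ->.
Qed.
End Countable.

Lemma requirements_enumerable (C : Type) (ctype : C -> ty) :
  (exists f : C -> nat, injective f) -> enumerable (sentence ctype + fun_pair ctype).
Proof. by case=> f f_inj; apply: enumerable_tree_code (requirement_code_inj f_inj). Qed.

(** * The Henkin chain of a Gaifman probability *)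

Section HenkinChain.
Variables (C : Type) (ctype : C -> ty).
Local Notation sentence := (sentence ctype).
Local Open Scope ring_scope.
Local Open Scope R_scope.
Variable mu : sentence -> R.
Hypothesis Hmu : probability mu.
Hypothesis Hgaif : gaifman mu.

Lemma entails_trans (p q r : sentence) : entails p q -> entails q r -> entails p r.
Proof. by move=> pq qr I HI /(pq I HI); apply: qr. Qed.

Lemma entails_tandl (p q : sentence) : entails (tand p q) p.
Proof. by move=> I HI /holds_tand-/(_ HI) []. Qed.

Lemma entails_tandr (p q : sentence) : entails (tand p q) q.
Proof. by move=> I HI /holds_tand-/(_ HI) []. Qed.

Lemma refine_decide (chi p : sentence) : 0 < mu chi ->
  exists chi', [/\ 0 < mu chi', entails chi' chi & entails chi' p \/ entails chi' (tneg p)].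
Proof.
move=> chi_gt0; case: (Rlt_or_le 0 (mu (tand chi p))) => [Hp | Hp].
  by exists (tand chi p); split; [| exact: entails_tandl | left; exact: entails_tandr].
exists (tand chi (tneg p)); split; [| exact: entails_tandl | right; exact: entails_tandr].
by have := mu_split Hmu chi p; lra.
Qed.

Lemma refine_gaif_conj a b (r s : tm ctype nil (Arr a b)) (chi : sentence) ts :
  0 < mu (tand chi (tneg (gaif_conj r s ts))) ->
  exists t, 0 < mu (tand chi (tneg (teq (TApp r t) (TApp s t)))).
Proof.
elim: ts => [|t ts IH] chi_gt0.
  suff : mu (tand chi (tneg (gaif_conj r s [::]))) = 0 by lra.
  apply: (mu_no_model Hmu) => -[I [HI]]; rewrite holds_tand // holds_tneg // => -[_]; apply.
  exact: holds_ttop.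
set A := tand chi (tneg (teq (TApp r t) (TApp s t))).
set B := tand chi (tneg (gaif_conj r s ts)).
have : mu (tand chi (tneg (gaif_conj r s (t :: ts)))) <= mu (tor A B).
  apply: (mu_le Hmu) => I HI.
  rewrite holds_tor // !holds_tand // !holds_tneg // !holds_gaif_conj //= => -[Hchi N].
  case: (EM (holds I (teq (TApp r t) (TApp s t)))) => Ht; last by left.
  by right; split => // N'; apply: N => u [<- | /N'].
have := mu_tor_le Hmu A B; case: (Rlt_or_le 0 (mu A)) => [A_gt0 | A_le0]; first by exists t.
by move=> *; apply: IH; rewrite -/B; lra.
Qed.

Lemma refine_witness a b (r s : tm ctype nil (Arr a b)) (chi : sentence) : 0 < mu chi ->
  exists chi', [/\ 0 < mu chi', entails chi' chi &
    entails chi' (teq r s) \/ exists t, entails chi' (tneg (teq (TApp r t) (TApp s t)))].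
Proof.
move=> chi_gt0; case: (Rlt_or_le 0 (mu (tand chi (teq r s)))) => [Hrs | Hrs].
  by exists (tand chi (teq r s)); split; [| exact: entails_tandl | left; exact: entails_tandr].
set A := tand chi (tneg (teq r s)).
have A_gt0 : 0 < mu A by have := mu_split Hmu chi (teq r s); rewrite -/A; lra.
have [t0 [ts conj_lt]] := (Hgaif r s).2 (mu A) A_gt0.
set L := t0 :: ts in conj_lt.
have E1 := mu_split Hmu (gaif_conj r s L) (teq r s).
have E2 : mu (tand (gaif_conj r s L) (teq r s)) = mu (teq r s).
  apply: (mu_equiv Hmu) => I HI; rewrite holds_tand //.
  by split => [[] | Hrs'] //; split => //; apply: holds_gaif_conj_teq.
have E3 : mu (tand A (gaif_conj r s L)) <= mu (tand (gaif_conj r s L) (tneg (teq r s))).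
  by apply: (mu_le Hmu) => I HI; rewrite !holds_tand //; tauto.
have E4 := mu_split Hmu A (gaif_conj r s L).
have /refine_gaif_conj [t At_gt0] : 0 < mu (tand A (tneg (gaif_conj r s L))) by lra.
exists (tand A (tneg (teq (TApp r t) (TApp s t)))); split => //.
  by apply: (entails_trans (q := A)); exact: entails_tandl.
by right; exists t; exact: entails_tandr.
Qed.

Definition settles (chi : sentence) (q : option (sentence + fun_pair ctype)) : Prop :=
  match q with
  | Some (inl p) => entails chi p \/ entails chi (tneg p)
  | Some (inr (existT a (existT b (r, s)))) =>
      entails chi (teq r s) \/ exists t, entails chi (tneg (teq (TApp r t) (TApp s t)))
  | None => True
  end.

Lemma refine_settles q (chi : sentence) : 0 < mu chi ->
  exists chi', [/\ 0 < mu chi', entails chi' chi & settles chi' q].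
Proof.
case: q => [[p | [a [b [r s]]]] | ] chi_gt0 /=.
- exact: refine_decide.
- exact: refine_witness.
- by exists chi; split => // I.
Qed.

Variable e : nat -> option (sentence + fun_pair ctype).
Hypothesis e_surj : forall q, exists k, e k = Some q.
Variable psi0 : sentence.
Hypothesis psi0_gt0 : 0 < mu psi0.

Fixpoint chain (k : nat) : {chi | 0 < mu chi} :=
  if k is k'.+1 then
    let: exist chi' H := cid (refine_settles (e k') (proj2_sig (chain k'))) in
    exist _ chi' (let: And3 H' _ _ := H in H')
  else exist _ psi0 psi0_gt0.

Lemma chain_step k :
  entails (proj1_sig (chain k.+1)) (proj1_sig (chain k)) /\ settles (proj1_sig (chain k.+1)) (e k).
Proof. by rewrite /=; case: cid => chi' []. Qed.

Lemma chain_entails (j k : nat) : leq j k -> entails (proj1_sig (chain k)) (proj1_sig (chain j)).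
Proof.
elim: k => [|k IH]; first by rewrite leqn0 => /eqP -> I HI.
rewrite leq_eqVlt => /orP [/eqP -> | /IH]; first by move=> I HI.
exact: entails_trans (chain_step k).1.
Qed.

Definition chain_theory (p : sentence) : Prop := exists k, entails (proj1_sig (chain k)) p.

Lemma chain_theory_psi0 : chain_theory psi0.
Proof. by exists 0%nat. Qed.

Lemma chain_theory_valid p : valid p -> chain_theory p.
Proof. by move=> Hp; exists 0%nat => I HI _; apply: Hp. Qed.

Lemma chain_theory_closed (p q r : sentence) : chain_theory p -> chain_theory q ->
  (forall I, is_interp I -> holds I p -> holds I q -> holds I r) -> chain_theory r.
Proof.
move=> [j Hj] [k Hk] pqr; exists (maxn j k) => I HI Hc; apply: pqr => //.
  exact/Hj/(chain_entails (leq_maxl j k)).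
exact/Hk/(chain_entails (leq_maxr j k)).
Qed.

Lemma chain_theory_tneg (p : sentence) : chain_theory (tneg p) <-> ~ chain_theory p.
Proof.
split.
  move=> [j Hj] [k Hk]; have [I [HI Hc]] := has_model_mu_gt0 Hmu (proj2_sig (chain (maxn j k))).
  have := Hj I HI (chain_entails (leq_maxl j k) HI Hc); rewrite holds_tneg //; apply.
  exact: Hk I HI (chain_entails (leq_maxr j k) HI Hc).
move=> Np; have [k ek] := e_surj (inl p); have [_] := chain_step k.
by rewrite ek => -[Hp | Hn]; [case: Np | ]; exists k.+1.
Qed.

Lemma chain_theory_witness a b (r s : tm ctype nil (Arr a b)) : ~ chain_theory (teq r s) ->
  exists t, ~ chain_theory (teq (TApp r t) (TApp s t)).
Proof.
move=> Nrs; have [k ek] := e_surj (inr (existT _ a (existT _ b (r, s)))).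
have [_] := chain_step k; rewrite ek => -[Hrs | [t Ht]]; first by case: Nrs; exists k.+1.
by exists t; apply/chain_theory_tneg; exists k.+1.
Qed.
End HenkinChain.

(** * The term model of a Henkin theory *)

Section TermModel.
Variables (C : Type) (ctype : C -> ty).
Local Notation sentence := (sentence ctype).
Local Notation tm := (tm ctype).
Variable T : sentence -> Prop.
Hypothesis T_tneg : forall p, T (tneg p) <-> ~ T p.
Hypothesis T_closed : forall p q r, T p -> T q ->
  (forall I, is_interp I -> holds I p -> holds I q -> holds I r) -> T r.
Hypothesis T_valid : forall p, valid p -> T p.
Hypothesis T_witness : forall a b (r s : tm nil (Arr a b)), ~ T (teq r s) ->
  exists t, ~ T (teq (TApp r t) (TApp s t)).

Lemma T_closed1 p r : T p -> (forall I, is_interp I -> holds I p -> holds I r) -> T r.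
Proof. by move=> Tp pr; apply: (T_closed Tp Tp) => I HI Hp _; apply: pr. Qed.

Definition T_eq a (r s : tm nil a) := T (teq r s).

Lemma T_eq_refl a (r : tm nil a) : T_eq r r.
Proof. by apply: T_valid => I HI; apply: holds_teq_refl. Qed.

Lemma T_eq_sym a (r s : tm nil a) : T_eq r s -> T_eq s r.
Proof. by move/T_closed1; apply=> I HI; apply: holds_teq_sym. Qed.

Lemma T_eq_trans a (r s u : tm nil a) : T_eq r s -> T_eq s u -> T_eq r u.
Proof. by move=> rs su; apply: (T_closed rs su) => I HI; apply: holds_teq_trans. Qed.

Lemma T_eq_app a b (f g : tm nil (Arr a b)) (u w : tm nil a) :
  T_eq f g -> T_eq u w -> T_eq (TApp f u) (TApp g w).
Proof. by move=> fg uw; apply: (T_closed fg uw) => I HI; apply: holds_teq_app. Qed.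

Lemma T_eq_iff (p q : sentence) : T_eq p q <-> (T p <-> T q).
Proof.
split => [pq | Tpq].
  by split => Tx; apply: (T_closed pq Tx) => I HI /(holds_teq_iff HI) ->.
case: (EM (T p)) => Tp.
  by apply: (T_closed Tp (iffLR Tpq Tp)) => I HI Hp Hq; apply/holds_teq_iff.
have /T_tneg Nq : ~ T q by move/Tpq.
move/T_tneg: Tp => Np; apply: (T_closed Np Nq) => I HI.
by rewrite !holds_tneg // => Hp Hq; apply/holds_teq_iff.
Qed.

Lemma T_tand (p q : sentence) : T (tand p q) <-> T p /\ T q.
Proof.
split => [Tpq | [Tp Tq]]; last by apply: (T_closed Tp Tq) => I HI Hp Hq; apply/holds_tand.
by split; apply: (T_closed1 Tpq) => I HI /holds_tand-/(_ HI) [].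
Qed.

Lemma T_tor (p q : sentence) : T (tor p q) <-> T p \/ T q.
Proof.
split => [Tpq | [] Tx]; last 2 first.
- by apply: (T_closed1 Tx) => I HI Hx; apply/holds_tor; auto.
- by apply: (T_closed1 Tx) => I HI Hx; apply/holds_tor; auto.
case: (EM (T p)) => [|/T_tneg Np]; first by left.
by right; apply: (T_closed Tpq Np) => I HI; rewrite holds_tor // holds_tneg //; case.
Qed.

Lemma T_closed_term_Ti : inhabited (tm nil Ti).
Proof.
have [|t _] := @T_witness Ti To (tconst Ti (ttop ctype)) (tconst Ti (tneg (ttop ctype))).
  apply/T_tneg/T_valid => I HI; rewrite holds_tneg //; exact: holds_tconst_neq.
by constructor.
Qed.

(* Terms modulo provable equality, each class represented by the predicate [T_eq t]. *)
Definition tclass a := {P : tm nil a -> Prop | exists t, P = T_eq t}.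

Definition cls a (t : tm nil a) : tclass a := exist _ (T_eq t) (ex_intro _ t erefl).

Definition rep a (X : tclass a) : tm nil a := proj1_sig (cid (proj2_sig X)).

Lemma cls_eq a (t u : tm nil a) : cls t = cls u <-> T_eq t u.
Proof.
split => [E | tu].
  by case: E => ->; apply: T_eq_refl.
suff E : T_eq t = T_eq u by rewrite /cls; move: (ex_intro _ t _); rewrite E => tE; apply: eq_exist.
apply/funext => x; apply/propext.
by split => [tx | ux]; [apply: T_eq_trans (T_eq_sym tu) tx | apply: T_eq_trans tu ux].
Qed.

Lemma cls_rep a (X : tclass a) : cls (rep X) = X.
Proof. by case: X => P HP; rewrite /rep /=; case: cid => t Pt; apply: eq_exist. Qed.

Lemma T_eq_rep_cls a (t : tm nil a) : T_eq (rep (cls t)) t.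
Proof. by apply/cls_eq; rewrite cls_rep. Qed.

Definition tv_term (X : tclass To) : bool := `[< T (rep X) >].

Lemma tv_term_cls p : tv_term (cls p) = `[< T p >].
Proof. by apply: asbool_equiv_eq; apply/T_eq_iff/T_eq_rep_cls. Qed.

Definition app_term a b (X : tclass (Arr a b)) (Y : tclass a) : tclass b :=
  cls (TApp (rep X) (rep Y)).

Lemma app_term_cls a b (f : tm nil (Arr a b)) (u : tm nil a) :
  app_term (cls f) (cls u) = cls (TApp f u).
Proof. by apply/cls_eq; apply: T_eq_app; apply: T_eq_rep_cls. Qed.

(* Extensionality of the term model is exactly the witness property of [T]. *)
Lemma app_term_ext a b (f g : tclass (Arr a b)) : (forall x, app_term f x = app_term g x) -> f = g.
Proof.
move=> fg; rewrite -(cls_rep f) -(cls_rep g); apply/cls_eq; apply: contrapT => /T_witness [t []].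
by apply/cls_eq; rewrite -!app_term_cls !cls_rep.
Qed.

Lemma tv_term_bij : bijective tv_term.
Proof.
have Ttop : T (ttop ctype) by apply: T_valid => I HI; exact: holds_ttop.
exists (fun b => cls (if b then ttop ctype else tneg (ttop ctype))) => [X | []];
  rewrite ?tv_term_cls; last 2 first.
- exact/asboolP.
- by apply/negbTE/asboolPn; rewrite T_tneg => /(_ Ttop).
rewrite -[X]cls_rep tv_term_cls; apply/cls_eq/T_eq_iff.
case: (asboolP (T (rep X))) => [Tx | NTx]; first by split.
by rewrite T_tneg; split => // /NTx.
Qed.

Definition term_model : interp ctype :=
  @Interp C ctype tclass app_term app_term_ext tv_term tv_term_bij
    (let: inhabits t := T_closed_term_Ti in inhabits (cls t)) (fun c => cls (TCst ctype nil c)).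

Definition env_subst G (r : env term_model G) : substitution ctype G nil :=
  fun c x => rep (lookup x r).

Lemma den_term_model G a (t : tm G a) (r : env term_model G) :
  den t r (cls (subst t (env_subst r))).
Proof.
elim: t r => [G0 a0 v|G0 c|G0 a0|G0|G0|G0|G0 a0 b0 f IHf u IHu|G0 a0 b0 t IH] r /=.
- by rewrite /env_subst cls_rep; apply: DVar.
- exact: DCst.
- apply: DEq => x y; rewrite -[x]cls_rep -[y]cls_rep /= !app_term_cls tv_term_cls cls_eq.
  by split => /asboolP.
- apply: DNeg => x; rewrite -[x]cls_rep /= app_term_cls !tv_term_cls.
  by rewrite (asbool_equiv_eq (T_tneg _)) asbool_neg.
- apply: DAnd => x y; rewrite -[x]cls_rep -[y]cls_rep /= !app_term_cls !tv_term_cls.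
  by rewrite (asbool_equiv_eq (T_tand _ _)) asbool_and.
- apply: DOr => x y; rewrite -[x]cls_rep -[y]cls_rep /= !app_term_cls !tv_term_cls.
  by rewrite (asbool_equiv_eq (T_tor _ _)) asbool_or.
- by rewrite -app_term_cls; apply: DApp (IHf r) (IHu r).
- apply: DLam => x; suff -> : @app _ _ term_model _ _ (cls (TLam (subst t (up_sub (env_subst r))))) x =
      cls (subst t (env_subst ((x, r) : env term_model (a0 :: G0)))) by apply: IH.
  rewrite -[x]cls_rep /= app_term_cls; apply/cls_eq.
  have -> : env_subst ((cls (rep x), r) : env term_model (a0 :: G0)) = scons (rep x) (env_subst r).
    by apply: (var_funext (T := tm nil)); apply: var_cons_ind => //=; rewrite cls_rep.
  by rewrite -subst_up_scons; apply: T_valid => I HI; apply: holds_beta.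
Qed.

Lemma den_term_model_closed a (t : tm nil a) : den t (tt : env term_model nil) (cls t).
Proof. by have := den_term_model t tt; rewrite subst_closed. Qed.

Lemma term_model_interp : is_interp term_model.
Proof. by move=> G a t r; eexists; apply: den_term_model. Qed.

Lemma holds_term_model p : holds term_model p <-> T p.
Proof.
rewrite (holds_den (den_term_model_closed p)) /= tv_term_cls.
by split => /asboolP.
Qed.

Lemma term_model_separating : separating term_model.
Proof.
move=> a b r s vr vs Hr Hs.
rewrite (den_fun Hr (den_term_model_closed r)) (den_fun Hs (den_term_model_closed s)).
move=> /cls_eq /T_witness [t Nt].
exists t, (cls (TApp r t)), (cls (TApp s t)).
by split; [|split]; [exact: den_term_model_closed .. | move/cls_eq].
Qed.
End TermModel.

Lemma has_separating_model_mu_gt0 (C : Type) (ctype : C -> ty)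
  (mu : sentence ctype -> R) (Hmu : probability mu) (Hgaif : gaifman mu) :
  (exists f : C -> nat, injective f) ->
  forall p, (0 < mu p)%R -> has_separating_model p.
Proof.
move=> /(requirements_enumerable ctype) [e e_surj] p p_gt0.
have T_tneg := chain_theory_tneg Hmu Hgaif e_surj p_gt0.
have T_closed := @chain_theory_closed _ _ _ Hmu Hgaif e _ p_gt0.
have T_valid := chain_theory_valid Hmu Hgaif e p_gt0.
have T_witness := @chain_theory_witness _ _ _ Hmu Hgaif _ e_surj _ p_gt0.
exists (term_model T_tneg T_closed T_valid T_witness); split; first exact: term_model_interp.
split; first exact: term_model_separating.
by apply/holds_term_model; apply: chain_theory_psi0.
Qed.

Theorem mainTheorem4 (C : Type) (ctype : C -> ty)
  (Hcountable : exists f : C -> nat, injective f)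
  (n : nat) (phi : 'I_n -> sentence ctype) (mu0 : sentence ctype -> R)
  (Hmu0 : forall i : 'I_n, (0 <= mu0 (phi i) <= 1)%R) :
  ((exists mu : sentence ctype -> R,
       probability mu /\ (forall i : 'I_n, mu (phi i) = mu0 (phi i)))
     <-> lin_system (@has_model C ctype) phi mu0)
  /\
  ((exists mu : sentence ctype -> R,
       probability mu /\ gaifman mu /\ (forall i : 'I_n, mu (phi i) = mu0 (phi i)))
     <-> lin_system (@has_separating_model C ctype) phi mu0).
Proof.
split; split.
- case=> mu [Hmu mu_phi]; apply: (lin_system_of_probability Hmu mu_phi) => S.
  exact: mu_no_model.
- exact: probability_of_lin_system.
- case=> mu [Hmu [Hgaif mu_phi]]; apply: (lin_system_of_probability Hmu mu_phi) => S Nsep.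
  case: (Rle_lt_or_eq_dec _ _ (mu_ge0 Hmu (psi phi S))) => // mu_gt0.
  by case: Nsep; apply: has_separating_model_mu_gt0 mu_gt0.
- by case/gaifman_of_lin_system => mu [Hmu Hgaif mu_phi]; exists mu.
Qed.
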